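(* There exists a numerical constant $c>0$ such that, for every time horizon $T\in\mathbb N$, every algorithm for the full-feedback brokerage problem satisfies \[\sup_\nu R_T^\nu\ge c\sqrt T,\] where the supremum is over all probability distributions $\nu$ on $[0,1]$.
   Context: Brokerage setting: for $p,v_1,v_2\in[0,1]$ let $\mathrm{gft}(p,v_1,v_2):=(v_1\vee v_2-v_1\wedge v_2)\,\mathbb I\{v_1\wedge v_2\le p\le v_1\vee v_2\}$ ($\vee,\wedge$ = max, min). Valuations $V_1,V_2,\dots$ are i.i.d. with law $\nu$ on $[0,1]$; at round $t$ the algorithm posts $P_t\in[0,1]$ and obtains $\mathrm{GFT}_t(P_t)$ with $\mathrm{GFT}_t(q):=\mathrm{gft}(q,V_{2t-1},V_{2t})$. A full-feedback algorithm chooses $P_t$ as a measurable function of $V_1,\dots,V_{2(t-1)}$ (and possibly internal randomness independent of the valuations). $R_T^\nu:=\sup_{p\in[0,1]}\mathbb E[\sum_{t=1}^T\mathrm{GFT}_t(p)]-\mathbb E[\sum_{t=1}^T\mathrm{GFT}_t(P_t)]$ when valuations have law $\nu$. *)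

From HB Require Import structures.
From mathcomp Require Import all_boot all_order all_algebra.
From mathcomp Require Import all_classical all_reals all_analysis.
Set Implicit Arguments. Unset Strict Implicit. Unset Printing Implicit Defensive.
Import Order.TTheory GRing.Theory Num.Theory.
Local Open Scope classical_set_scope.
Local Open Scope ring_scope.

Section Brokerage.
Variable R : realType.

Definition gft (p v1 v2 : R) : R :=
  if (Num.min v1 v2 <= p) && (p <= Num.max v1 v2)
  then Num.max v1 v2 - Num.min v1 v2 else 0.

(* Expectation of F(V_1,...,V_n) for V_1,...,V_n i.i.d. with law nu,
   written as the iterated integral over the product measure nu^{(x) n}
   (V_1 is the head of the sequence). *)
Fixpoint Eiid (nu : probability R R) (n : nat) (F : seq R -> \bar R) : \bar R :=
  match n with
  | 0 => F [::]
  | n.+1 => (\int[nu]_x Eiid nu n (fun s => F (x :: s)))%E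
  end.

(* Total gain from trade over T rounds given the valuation sequence s
   (round k+1, k = 0..T-1, uses V_{2k+1} = s`_(2k), V_{2k+2} = s`_(2k+1))
   and the posted prices price k. *)
Definition total_gft (T : nat) (price : nat -> R) (s : seq R) : R :=
  \sum_(k < T) gft (price k) (nth 0 s (2 * k)) (nth 0 s (2 * k).+1).

(* A full-feedback algorithm: internal randomness u ~ mu on U, and the
   price at round k+1 is f k u (V_1,...,V_{2k}). *)
Definition regret (T : nat) (dU : measure_display) (U : measurableType dU)
  (mu : probability U R) (f : nat -> U -> seq R -> R) (nu : probability R R)
  : \bar R :=
  (ereal_sup [set Eiid nu (2 * T) (fun s => (total_gft T (fun _ => p) s)%:E)
             | p in `[0%R, 1%R] : set R]
   - \int[mu]_u Eiid nu (2 * T)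
        (fun s => (total_gft T (fun k => f k u (take (2 * k) s)) s)%:E))%E.

End Brokerage.

From HB Require Import structures.
From mathcomp Require Import all_boot all_order all_algebra.
From mathcomp Require Import all_classical all_reals all_analysis.
From mathcomp Require Import measurable_realfun zify ring lra.
Set Implicit Arguments. Unset Strict Implicit. Unset Printing Implicit Defensive.
Import Order.TTheory GRing.Theory Num.Theory.
Local Open Scope classical_set_scope.
Local Open Scope ring_scope.

(* Le Cam's two-point method. For a = 1/2 + eps let nu_a be the law of
   (X + 2 Y) / 3 with X, Y i.i.d. Bernoulli(1 - a), supported on the grid
   {0, 1/3, 2/3, 1}, and nu_(1-a) its mirror image. Price 1/3 is optimal for
   nu_a and price 2/3 for nu_(1-a), and the per-round losses of any price
   against the two laws add up to at least a gap of order eps. A price chosen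
   after 2k observations cannot tell the two laws apart, since their product
   laws still overlap by ((4 a (1 - a))^(2k))^2 / 2 (half the squared
   Bhattacharyya affinity). Summing over T rounds with eps = 1 / (8 sqrt T), the
   overlap stays above 3/8, so the two regrets add up to order sqrt T. *)

Lemma le_ge0_integral d (T : measurableType d) (R : realType)
    (mu : {measure set T -> \bar R}) (f g : T -> \bar R) :
  (forall x, 0 <= f x)%E -> (forall x, f x <= g x)%E ->
  (\int[mu]_x f x <= \int[mu]_x g x)%E.
Proof.
move=> f0 fg; have g0 x : (0 <= g x)%E by apply: le_trans (f0 x) (fg x).
rewrite !ge0_integralTE //; apply: ereal_sup_le => _ [h hf <-]; exists h => //.
by move=> x; apply: le_trans (hf x) (fg x).
Qed.

Section GridLaw.
Variable R : realType.

Definition grid (i : nat) : R := i%:R / 3.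

Definition grid_pts : seq R := map grid (iota 0 4).

Definition grid_wt (a : R) (i : nat) : R :=
  match i with 0 => a ^+ 2 | 1 | 2 => a * (1 - a) | _ => (1 - a) ^+ 2 end.

Lemma grid_wt_sum (a : R) : \sum_(i < 4) grid_wt a i = 1.
Proof. by rewrite !big_ord_recr big_ord0 /=; ring. Qed.

Lemma grid_wt_mirror (a : R) i : (i < 4)%N ->
  grid_wt a i * grid_wt (1 - a) i = (a * (1 - a)) ^+ 2.
Proof. by case: i => [|[|[|[|i]]]] //= _; ring. Qed.

Lemma measurable_fun_restrict_seq (s : seq R) (h : R -> \bar R) (e : \bar R) :
  measurable_fun setT (fun x => if x \in s then h x else e).
Proof.
elim: s => [|c s IH]; first exact: measurable_cst.
have -> : (fun x => if x \in c :: s then h x else e) =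
    fun x => if x == c then h c else if x \in s then h x else e.
  by apply/funext => x; rewrite in_cons; case: eqP => [->|].
apply: measurable_fun_ifT => //.
exact: measurable_fun_eqr.
Qed.

Variables (a : R) (a0 : 0 <= a) (a1 : a <= 1).

Lemma grid_wt_ge0 i : 0 <= grid_wt a i.
Proof. by case: i => [|[|[|i]]] /=; rewrite ?sqr_ge0 // mulr_ge0 // subr_ge0. Qed.

Definition grid_law_fun := msum (fun i =>
  mscale (NngNum (grid_wt_ge0 i)) (\d_(grid i) : {measure set R -> \bar R})) 4.

HB.instance Definition _ := Measure.on grid_law_fun.

Lemma grid_law_setT : grid_law_fun setT = 1%E.
Proof.
rewrite /grid_law_fun /msum /mscale /= !big_ord_recr big_ord0 /= /mscale /=.
rewrite !diracT !mule1 add0e -!EFinD; congr (_%:E); rewrite /=; ring.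
Qed.

HB.instance Definition _ :=
  Measure_isProbability.Build _ _ _ grid_law_fun grid_law_setT.

Definition grid_law : probability R R := grid_law_fun.

Lemma grid_law_itv01 : grid_law `[0%R, 1%R]%classic = 1%E.
Proof.
rewrite -grid_law_setT /grid_law /= /grid_law_fun /msum /=.
apply: eq_bigr => i _; rewrite /mscale /= !diracE !mem_set //= in_itv /= /grid.
by case: i => [[|[|[|[|i]]]] Hi] //=; apply/andP; split; lra.
Qed.

Lemma integral_grid_law_measurable (h : R -> \bar R) :
  measurable_fun setT h -> (forall x, 0 <= h x)%E ->
  (\int[grid_law]_x h x = \sum_(i < 4) (grid_wt a i)%:E * h (grid i))%E.
Proof.
move=> mh h0; rewrite ge0_integral_measure_sum //.
apply: eq_bigr => i _; rewrite ge0_integral_mscale //= integral_dirac //.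
by rewrite diracT mul1e.
Qed.

(* The integrand need not be measurable: it is squeezed between two
   measurable functions that agree with it on the grid. *)
Lemma integral_grid_law (h : R -> \bar R) : (forall x, 0 <= h x)%E ->
  (\int[grid_law]_x h x = \sum_(i < 4) (grid_wt a i)%:E * h (grid i))%E.
Proof.
move=> h0.
pose hr e x := if x \in grid_pts then h x else e.
have hr0 e : (0 <= e)%E -> forall x, (0 <= hr e x)%E by rewrite /hr => e0 x; case: ifP.
have hrE e : (0 <= e)%E ->
    (\int[grid_law]_x hr e x = \sum_(i < 4) (grid_wt a i)%:E * h (grid i))%E.
  move=> e0; rewrite integral_grid_law_measurable //;
    [|exact: measurable_fun_restrict_seq|exact: hr0].
  apply: eq_bigr => i _; rewrite /hr map_f // mem_iota /=; exact: ltn_ord.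
apply/eqP; rewrite eq_le -{1}(hrE +oo%E) // -(hrE 0%E) //.
apply/andP; split; apply: le_ge0_integral => // x; rewrite /hr;
  by case: ifP => //; rewrite leey.
Qed.

End GridLaw.

Section Egrid.
Variables (R : realType) (w : nat -> R).

Fixpoint Egrid (n : nat) (F : seq R -> R) : R :=
  match n with
  | 0 => F [::]
  | n'.+1 => \sum_(i < 4) w i * Egrid n' (fun s => F (grid R i :: s))
  end.

Lemma eq_Egrid n F G : (forall s, size s = n -> F s = G s) -> Egrid n F = Egrid n G.
Proof.
elim: n F G => [|n IH] F G FG /=; first exact: FG.
by apply: eq_bigr => i _; congr (_ * _); apply: IH => s sn; apply: FG; rewrite /= sn.
Qed.

Lemma Egrid_cat m n F :
  Egrid (m + n) F = Egrid m (fun s1 => Egrid n (fun s2 => F (s1 ++ s2))).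
Proof. by elim: m F => [|m IH] F //=; apply: eq_bigr => i _; rewrite IH. Qed.

Lemma EgridD n F G : Egrid n (fun s => F s + G s) = Egrid n F + Egrid n G.
Proof.
elim: n F G => [|n IH] F G //=.
by rewrite -big_split; apply: eq_bigr => i _; rewrite IH mulrDr.
Qed.

Lemma EgridN n F : Egrid n (fun s => - F s) = - Egrid n F.
Proof.
elim: n F => [|n IH] F //=.
by rewrite -sumrN; apply: eq_bigr => i _; rewrite IH mulrN.
Qed.

Lemma Egrid_sum n m (F : nat -> seq R -> R) :
  Egrid n (fun s => \sum_(k < m) F k s) = \sum_(k < m) Egrid n (F k).
Proof.
elim: m F => [|m IH] F.
  rewrite big_ord0; under eq_Egrid do rewrite big_ord0.
  by elim: n {F} => [|n IH] //=; rewrite big1 // => i _; rewrite IH mulr0.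
under eq_Egrid do rewrite big_ord_recr.
by rewrite EgridD IH big_ord_recr.
Qed.

Hypothesis w_ge0 : forall i, 0 <= w i.
Hypothesis w_sum : \sum_(i < 4) w i = 1.

Lemma Egrid_cst n c : Egrid n (fun _ => c) = c.
Proof.
elim: n => [|n IH] //=; under eq_bigr do rewrite IH.
by rewrite -mulr_suml w_sum mul1r.
Qed.

Lemma ler_Egrid n F G : (forall s, size s = n -> F s <= G s) -> Egrid n F <= Egrid n G.
Proof.
elim: n F G => [|n IH] F G FG /=; first exact: FG.
apply: ler_sum => i _; apply: ler_wpM2l => //; apply: IH => s sn.
by apply: FG; rewrite /= sn.
Qed.

Lemma Egrid_ge0 n F : (forall s, size s = n -> 0 <= F s) -> 0 <= Egrid n F.
Proof. by move=> F0; rewrite -(Egrid_cst n 0); apply: ler_Egrid. Qed.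

End Egrid.

Lemma Eiid_grid_law (R : realType) (a : R) (a0 : 0 <= a) (a1 : a <= 1) n
    (F : seq R -> R) : (forall s, 0 <= F s) ->
  Eiid (grid_law a0 a1) n (fun s => (F s)%:E) = (Egrid (grid_wt a) n F)%:E.
Proof.
elim: n F => [|n IH] F F0 //=.
under eq_integral do rewrite (IH (fun s => F (_ :: s))) //.
rewrite integral_grid_law; last first.
  by move=> x; rewrite lee_fin; apply: Egrid_ge0 => //;
    [exact: grid_wt_ge0|exact: grid_wt_sum].
by rewrite -sumEFin.
Qed.

(* [Epair n c d K] sums [K (c * P s) (d * Q s) s] over the s in grid^n, where
   P and Q are the product weights of [wp] and [wm]. *)
Section Epair.
Variables (R : realType) (wp wm : nat -> R).

Fixpoint Epair (n : nat) (c d : R) (K : R -> R -> seq R -> R) : R :=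
  match n with
  | 0 => K c d [::]
  | n'.+1 => \sum_(i < 4)
      Epair n' (c * wp i) (d * wm i) (fun c d s => K c d (grid R i :: s))
  end.

Lemma Epair_fstE n c d F : c * Egrid wp n F = Epair n c d (fun c' _ s => c' * F s).
Proof.
elim: n c d F => [|n IH] c d F //=.
by rewrite mulr_sumr; apply: eq_bigr => i _; rewrite -IH mulrA.
Qed.

Lemma Epair_sndE n c d F : d * Egrid wm n F = Epair n c d (fun _ d' s => d' * F s).
Proof.
elim: n c d F => [|n IH] c d F //=.
by rewrite mulr_sumr; apply: eq_bigr => i _; rewrite -IH mulrA.
Qed.

Lemma EpairD n c d K1 K2 :
  Epair n c d (fun c d s => K1 c d s + K2 c d s) = Epair n c d K1 + Epair n c d K2.
Proof.
elim: n c d K1 K2 => [|n IH] c d K1 K2 //=.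
by rewrite -big_split; apply: eq_bigr => i _; rewrite IH.
Qed.

Lemma EpairZ n c d e K :
  Epair n c d (fun c d s => e * K c d s) = e * Epair n c d K.
Proof.
elim: n c d K => [|n IH] c d K //=.
by rewrite mulr_sumr; apply: eq_bigr => i _; rewrite IH.
Qed.

Hypotheses (wp_ge0 : forall i, 0 <= wp i) (wm_ge0 : forall i, 0 <= wm i).
Hypotheses (wp_sum : \sum_(i < 4) wp i = 1) (wm_sum : \sum_(i < 4) wm i = 1).

Lemma ler_Epair n c d K1 K2 : 0 <= c -> 0 <= d ->
  (forall c' d' s, 0 <= c' -> 0 <= d' -> size s = n -> K1 c' d' s <= K2 c' d' s) ->
  Epair n c d K1 <= Epair n c d K2.
Proof.
elim: n c d K1 K2 => [|n IH] c d K1 K2 c0 d0 K12 /=; first exact: K12.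
apply: ler_sum => i _; apply: IH; rewrite ?mulr_ge0 // => c' d' s c'0 d'0 sn.
by apply: K12 => //=; rewrite sn.
Qed.

Lemma Epair_fst n c d : Epair n c d (fun c' _ _ => c') = c.
Proof.
elim: n c d => [|n IH] c d //=; under eq_bigr do rewrite IH.
by rewrite -mulr_sumr wp_sum mulr1.
Qed.

Lemma Epair_snd n c d : Epair n c d (fun _ d' _ => d') = d.
Proof.
elim: n c d => [|n IH] c d //=; under eq_bigr do rewrite IH.
by rewrite -mulr_sumr wm_sum mulr1.
Qed.

(* Pointwise, min c d * delta <= c * X s + d * Y s. *)
Lemma Egrid_two_point_ge n (X Y : seq R -> R) (delta : R) : 0 <= delta ->
  (forall s, size s = n -> [/\ 0 <= X s, 0 <= Y s & delta <= X s + Y s]) ->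
  delta * Epair n 1 1 (fun c d _ => Num.min c d) <= Egrid wp n X + Egrid wm n Y.
Proof.
move=> delta0 XY; rewrite -(mul1r (Egrid wp n X)) -(mul1r (Egrid wm n Y)).
rewrite (Epair_fstE n 1 1) (Epair_sndE n 1 1) -EpairD -EpairZ.
apply: ler_Epair => // c d s c0 d0 /XY[X0 Y0 XY0].
have [cd|dc] := lerP c d.
- have : 0 <= (d - c) * Y s by apply: mulr_ge0; lra.
  have : 0 <= c * (X s + Y s - delta) by apply: mulr_ge0; lra.
  lra.
- have : 0 <= (c - d) * X s by apply: mulr_ge0; lra.
  have : 0 <= d * (X s + Y s - delta) by apply: mulr_ge0; lra.
  lra.
Qed.

Lemma amgm_min_max (c d rho t : R) : 0 <= c -> 0 <= d -> 0 <= rho -> 0 < t ->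
  c * d = rho ^+ 2 -> 2 * rho * t <= t ^+ 2 * Num.min c d + Num.max c d.
Proof.
move=> c0 d0 rho0 t0 cd.
wlog cled : c d c0 d0 cd / c <= d.
  move=> sym; have /orP[|dlec] := le_total c d; first exact: sym.
  by rewrite minC maxC; apply: sym; rewrite // mulrC.
rewrite (min_idPl cled) (max_idPr cled).
have [c00|cn0] := eqVneq c 0.
  by move: cd; rewrite c00 mul0r => /esym/eqP; rewrite sqrf_eq0 => /eqP->; nra.
have : 0 <= c * (t ^+ 2 * c + d - 2 * rho * t).
  by rewrite (_ : _ * _ = (t * c - rho) ^+ 2) ?sqr_ge0 // sqrrB -cd; ring.
by rewrite pmulr_rge0 ?lt_def ?cn0 //; lra.
Qed.

Variable r : R.
Hypotheses (r_ge0 : 0 <= r) (wpm : forall i, (i < 4)%N -> wp i * wm i = r ^+ 2).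

Lemma Epair_amgm n (c d rho t : R) : 0 <= c -> 0 <= d -> 0 <= rho -> 0 < t ->
  c * d = rho ^+ 2 ->
  2 * rho * t * (4 * r) ^+ n <=
    t ^+ 2 * Epair n c d (fun c d _ => Num.min c d) +
    Epair n c d (fun c d _ => Num.max c d).
Proof.
elim: n c d rho => [|n IH] c d rho c0 d0 rho0 t0 cd /=.
  by rewrite expr0 mulr1; apply: amgm_min_max.
rewrite mulr_sumr -big_split /=.
rewrite (_ : 2 * rho * t * _ =
  \sum_(i < 4) (2 * (rho * r) * t * (4 * r) ^+ n)); last first.
  by rewrite !big_ord_recr big_ord0 /= exprS; ring.
apply: ler_sum => i _; apply: IH; rewrite ?mulr_ge0 //.
by rewrite mulrACA cd wpm // exprMn.
Qed.

(* Le Cam's bound: the overlap sum_s min (P s) (Q s) of the product laws is at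
   least half the square of their affinity sum_s sqrt (P s Q s) = (4 r)^n. *)
Lemma Epair_min_ge n : 0 < 4 * r ->
  ((4 * r) ^+ n) ^+ 2 / 2 <= Epair n 1 1 (fun c d _ => Num.min c d).
Proof.
move=> r4; set h := (4 * r) ^+ n.
have h0 : 0 < h by rewrite exprn_gt0.
have Emax : Epair n 1 1 (fun c d _ => Num.max c d) <= 2.
  apply: (@le_trans _ _ (Epair n 1 1 (fun c d _ => c + d))).
    apply: ler_Epair; rewrite ?ler01 // => c' d' _ c0 d0 _.
    by case: (lerP c' d') => _; lra.
  by rewrite EpairD Epair_fst Epair_snd; lra.
have := @Epair_amgm n 1 1 1 (2 / h) ler01 ler01 ler01.
rewrite divr_gt0 // mulr1 expr1n => /(_ isT erefl).
rewrite -/h; set A := Epair n 1 1 (fun c d _ => Num.min c d) => amgm.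
have e1 : 2 * (2 / h) * h = 4 by field; rewrite gt_eqF.
have hA : 2 <= (2 / h) ^+ 2 * A by lra.
rewrite (_ : A = (2 / h) ^+ 2 * A * (h ^+ 2 / 4)); last by field; rewrite gt_eqF.
rewrite (_ : h ^+ 2 / 2 = 2 * (h ^+ 2 / 4)); last by field.
by apply: ler_wpM2r => //; rewrite divr_ge0 ?sqr_ge0.
Qed.

End Epair.

Section GainFromTrade.
Variable R : realType.

(* All the case analysis of [gft] that lra needs, as one proposition. *)
Lemma gft_cases (p x y : R) :
  ((x <= y /\ Num.min x y = x /\ Num.max x y = y) \/
   (y < x /\ Num.min x y = y /\ Num.max x y = x)) /\
  ((Num.min x y <= p /\ p <= Num.max x y /\
    gft p x y = Num.max x y - Num.min x y) \/
   ((p < Num.min x y \/ Num.max x y < p) /\ gft p x y = 0)).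
Proof.
split; first by case: (lerP x y) => h; [left|right].
rewrite /gft; case: ifP => [/andP[]|/negbT]; first by left.
by rewrite negb_and -!ltNge => /orP; right.
Qed.

Lemma gft_ge0 (p x y : R) : 0 <= gft p x y.
Proof. by have := gft_cases p x y; lra. Qed.

Lemma measurable_gft (x y : R) : measurable_fun setT (fun p : R => gft p x y).
Proof.
rewrite /gft; apply: measurable_fun_ifT => //.
by apply: measurable_and; apply: measurable_fun_ler.
Qed.

Definition on_grid (x : R) := x = 0 \/ x = 1/3 \/ x = 2/3 \/ x = 1.

Lemma grid_on_grid (i : 'I_4) : on_grid (grid R i).
Proof. by rewrite /on_grid /grid; case: i => [[|[|[|[|i]]]] Hi] //=; lra. Qed.

Lemma gft_le_third (p x y : R) : on_grid x -> on_grid y -> 0 <= p -> p < 2/3 ->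
  gft p x y <= gft (1/3) x y.
Proof.
move=> hx hy p0 p1; have := gft_cases p x y; have := gft_cases (1/3) x y.
by rewrite /on_grid in hx hy; lra.
Qed.

Lemma gft_le_two_thirds (p x y : R) :
  on_grid x -> on_grid y -> 2/3 <= p -> p <= 1 -> gft p x y <= gft (2/3) x y.
Proof.
move=> hx hy p0 p1; have := gft_cases p x y; have := gft_cases (2/3) x y.
by rewrite /on_grid in hx hy; lra.
Qed.

Definition third_advantage (i j : nat) : R :=
  if ((i == 0) && (j == 1)) || ((i == 1) && (j == 0)) then 1/3
  else if ((i == 2) && (j == 3)) || ((i == 3) && (j == 2)) then - (1/3) else 0.

Lemma gft_third_advantage (i j : 'I_4) :
  gft (1/3) (grid R i) (grid R j) - gft (2/3) (grid R i) (grid R j) =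
  third_advantage i j.
Proof.
rewrite /third_advantage /grid.
case: i => [[|[|[|[|i]]]] Hi] //=; case: j => [[|[|[|[|j]]]] Hj] //=;
  match goal with |- gft ?p ?x ?y - gft ?q _ _ = _ =>
    have := gft_cases p x y; have := gft_cases q x y end; lra.
Qed.

Variable w : nat -> R.

Definition gft_mean (p : R) : R :=
  Egrid w 2 (fun s => gft p (nth 0 s 0) (nth 0 s 1)).

Lemma gft_meanE p :
  gft_mean p = \sum_(i < 4) w i * \sum_(j < 4) w j * gft p (grid R i) (grid R j).
Proof.
by apply: eq_bigr => i _; congr (_ * _); rewrite big_ord_recr big_ord0 /=.
Qed.

Lemma measurable_gft_mean : measurable_fun setT gft_mean.
Proof.
rewrite (_ : gft_mean = fun p => \sum_(i < 4) w i *
    \sum_(j < 4) w j * gft p (grid R i) (grid R j)); last first.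
  by apply/funext => p; rewrite gft_meanE.
apply: measurable_sum => i; apply: measurable_funM => //.
by apply: measurable_sum => j; apply: measurable_funM => //; exact: measurable_gft.
Qed.

Lemma gft_mean_third_diff :
  gft_mean (1/3) - gft_mean (2/3) = 2/3 * (w 0 * w 1 - w 2 * w 3).
Proof.
have -> : gft_mean (1/3) - gft_mean (2/3) =
    \sum_(i < 4) w i * \sum_(j < 4) w j * third_advantage i j.
  rewrite !gft_meanE -sumrB; apply: eq_bigr => i _.
  rewrite -mulrBr -sumrB; congr (_ * _).
  by apply: eq_bigr => j _; rewrite -mulrBr gft_third_advantage.
by rewrite !big_ord_recr big_ord0 /= /third_advantage /= !big_ord0; ring.
Qed.

Hypothesis w_ge0 : forall i, 0 <= w i.

Lemma gft_mean_ge0 p : 0 <= gft_mean p.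
Proof.
rewrite gft_meanE; apply: sumr_ge0 => i _; apply: mulr_ge0 => //.
by apply: sumr_ge0 => j _; apply: mulr_ge0 => //; exact: gft_ge0.
Qed.

Lemma gft_mean_le_third p : 0 <= p -> p < 2/3 -> gft_mean p <= gft_mean (1/3).
Proof.
move=> p0 p1; rewrite !gft_meanE; apply: ler_sum => i _; apply: ler_wpM2l => //.
apply: ler_sum => j _; apply: ler_wpM2l => //.
by apply: gft_le_third => //; exact: grid_on_grid.
Qed.

Lemma gft_mean_le_two_thirds p :
  2/3 <= p -> p <= 1 -> gft_mean p <= gft_mean (2/3).
Proof.
move=> p0 p1; rewrite !gft_meanE; apply: ler_sum => i _; apply: ler_wpM2l => //.
apply: ler_sum => j _; apply: ler_wpM2l => //.
by apply: gft_le_two_thirds => //; exact: grid_on_grid.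
Qed.

End GainFromTrade.

(* The price of round k only depends on the first 2 k valuations, so averaging
   over the round's own pair first turns its gain into [gft_mean]. *)
Lemma Egrid_total_gft (R : realType) (w : nat -> R) (T : nat)
    (P : nat -> seq R -> R) : \sum_(i < 4) w i = 1 ->
  Egrid w (2 * T) (fun s => total_gft T (fun k => P k (take (2 * k) s)) s) =
  \sum_(k < T) Egrid w (2 * k) (fun s => gft_mean w (P k s)).
Proof.
move=> w_sum; rewrite /total_gft (Egrid_sum w (2 * T) T (fun k s =>
  gft (P k (take (2 * k) s)) (nth 0 s (2 * k)) (nth 0 s (2 * k).+1))).
apply: eq_bigr => -[k kT] _ /=.
rewrite (_ : (2 * T = 2 * k + (2 + (2 * T - 2 * k - 2)))%N); last by lia.
rewrite Egrid_cat; apply: eq_Egrid => s1 s1k; rewrite Egrid_cat.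
apply: eq_Egrid => s2 s2k.
rewrite -[RHS](Egrid_cst w_sum (2 * T - 2 * k - 2)); apply: eq_Egrid => s3 _.
rewrite take_size_cat // !nth_cat s1k ltnn subnn s2k subSnn.
by rewrite (_ : ((2 * k).+1 < 2 * k)%N = false) //; lia.
Qed.

Section TwoPoint.
Variables (R : realType) (a : R).
Hypothesis a_range : 1/2 <= a < 1.

Local Notation wp := (grid_wt a).
Local Notation wm := (grid_wt (1 - a)).

Let wp_ge0 i : 0 <= wp i.
Proof. by have /andP[? ?] := a_range; apply: grid_wt_ge0; lra. Qed.
Let wm_ge0 i : 0 <= wm i.
Proof. by have /andP[? ?] := a_range; apply: grid_wt_ge0; lra. Qed.

Definition price_gap : R := 2/3 * (wp 0 * wp 1 - wp 2 * wp 3).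

Lemma price_gapE : price_gap = 2/3 * (a * (1 - a)) * (2 * a - 1).
Proof. by rewrite /price_gap /=; ring. Qed.

Lemma price_gap_ge0 : 0 <= price_gap.
Proof.
have /andP[? ?] := a_range.
by rewrite price_gapE; apply: mulr_ge0; [rewrite mulr_ge0 ?mulr_ge0 //; lra|lra].
Qed.

Lemma gft_mean_two_point (p : R) : 0 <= p <= 1 ->
  [/\ 0 <= gft_mean wp (1/3) - gft_mean wp p,
      0 <= gft_mean wm (2/3) - gft_mean wm p
    & price_gap <= (gft_mean wp (1/3) - gft_mean wp p) +
                   (gft_mean wm (2/3) - gft_mean wm p)].
Proof.
case/andP=> p0 p1.
have dp := gft_mean_third_diff wp; have dm := gft_mean_third_diff wm.
have gap0 := price_gap_ge0; rewrite -/price_gap in dp.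
rewrite (_ : 2/3 * _ = - price_gap) in dm; last by rewrite /price_gap /=; ring.
have [plt|pge] := ltP p (2/3).
  have := gft_mean_le_third wp_ge0 p0 plt; have := gft_mean_le_third wm_ge0 p0 plt.
  by split; lra.
have := gft_mean_le_two_thirds wp_ge0 pge p1.
have := gft_mean_le_two_thirds wm_ge0 pge p1.
by split; lra.
Qed.

Lemma Egrid_gft_mean_pair_le n (P : seq R -> R) :
  (forall s, size s = n -> 0 <= P s <= 1) ->
  Egrid wp n (fun s => gft_mean wp (P s)) +
  Egrid wm n (fun s => gft_mean wm (P s)) <=
  gft_mean wp (1/3) + gft_mean wm (2/3) -
    price_gap * (((4 * (a * (1 - a))) ^+ n) ^+ 2 / 2).
Proof.
move=> P01; have /andP[? ?] := a_range.
have Ediff (w : nat -> R) (c : R) : \sum_(i < 4) w i = 1 -> forall F : seq R -> R,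
    Egrid w n (fun s => c - F s) = c - Egrid w n F.
  by move=> w_sum F; rewrite EgridD EgridN Egrid_cst.
have regret_sum : price_gap * (((4 * (a * (1 - a))) ^+ n) ^+ 2 / 2) <=
    Egrid wp n (fun s => gft_mean wp (1/3) - gft_mean wp (P s)) +
    Egrid wm n (fun s => gft_mean wm (2/3) - gft_mean wm (P s)).
  apply: le_trans (Egrid_two_point_ge wp_ge0 wm_ge0 price_gap_ge0 _); last first.
    by move=> s /P01 /gft_mean_two_point.
  apply: ler_wpM2l; first exact: price_gap_ge0.
  apply: Epair_min_ge => //; try exact: grid_wt_sum.
  - by apply: mulr_ge0; lra.
  - by move=> i; exact: grid_wt_mirror.
  - by nra.
rewrite !Ediff in regret_sum; try exact: grid_wt_sum.
lra.
Qed.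

End TwoPoint.

Lemma measurable_Egrid (R : realType) dU (U : measurableType dU) (w : nat -> R)
    n (F : U -> seq R -> R) :
  (forall s, size s = n -> measurable_fun setT (fun u => F u s)) ->
  measurable_fun setT (fun u => Egrid w n (F u)).
Proof.
elim: n F => [|n IH] F mF /=; first exact: mF.
apply: measurable_sum => i; apply: measurable_funM => //.
by apply: (IH (fun u s => F u (grid R i :: s))) => s sn; apply: mF; rewrite /= sn.
Qed.

Section Algorithm.
Variables (R : realType) (T : nat) (dU : measure_display) (U : measurableType dU).
Variables (mu : probability U R) (f : nat -> U -> seq R -> R).
Hypothesis f_meas : forall k : nat,
  measurable_fun setT (fun p : U * (2 * k).-tuple R => f k p.1 (tval p.2)).
Hypothesis f01 : forall (k : nat) (u : U) (s : (2 * k).-tuple R),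
  0 <= f k u (tval s) <= 1.

Lemma measurable_fun_price k s : size s = (2 * k)%N ->
  measurable_fun setT (fun u => f k u s).
Proof.
move=> sk; have sk' : size s == (2 * k)%N by apply/eqP.
exact: (measurable_fun_pair1 (Tuple sk') (@f_meas k)).
Qed.

Lemma price_in01 k u s : size s = (2 * k)%N -> 0 <= f k u s <= 1.
Proof.
move=> sk; have sk' : size s == (2 * k)%N by apply/eqP.
exact: (f01 u (Tuple sk')).
Qed.

Definition alg_gain (w : nat -> R) (u : U) : R :=
  \sum_(k < T) Egrid w (2 * k) (fun s => gft_mean w (f k u s)).

Lemma measurable_alg_gain w : measurable_fun setT (alg_gain w).
Proof.
apply: measurable_sum => k; apply: measurable_Egrid => s sk.
exact: measurableT_comp (measurable_gft_mean w) (measurable_fun_price sk).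
Qed.

Lemma alg_gain_ge0 a u : 0 <= a <= 1 -> 0 <= alg_gain (grid_wt a) u.
Proof.
case/andP=> a0 a1; apply: sumr_ge0 => k _.
apply: (Egrid_ge0 (grid_wt_ge0 a0 a1) (grid_wt_sum a)) => s _.
exact/gft_mean_ge0/grid_wt_ge0.
Qed.

Lemma total_gft_ge0 P (s : seq R) : 0 <= total_gft T P s.
Proof. by apply: sumr_ge0 => k _; exact: gft_ge0. Qed.

Lemma regret_grid_law_ge a (a0 : 0 <= a) (a1 : a <= 1) p : 0 <= p <= 1 ->
  ((T%:R * gft_mean (grid_wt a) p)%:E - \int[mu]_u (alg_gain (grid_wt a) u)%:E
    <= regret T mu f (grid_law a0 a1))%E.
Proof.
move=> p01; rewrite /regret; apply: leeB.
  apply: ereal_sup_ubound; exists p; first by rewrite /= in_itv.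
  rewrite Eiid_grid_law; last exact: total_gft_ge0.
  rewrite (Egrid_total_gft _ _ (grid_wt_sum a)); congr (_%:E).
  under eq_bigr do rewrite (Egrid_cst (grid_wt_sum a)).
  by rewrite sumr_const card_ord mulr_natl.
apply: le_ge0_integral => u.
  rewrite Eiid_grid_law ?lee_fin; last by move=> s; apply: total_gft_ge0.
  apply: Egrid_ge0 => *; [exact: grid_wt_ge0|exact: grid_wt_sum|exact: total_gft_ge0].
rewrite Eiid_grid_law; last by move=> s; apply: total_gft_ge0.
by rewrite (Egrid_total_gft _ (fun k s => f k u s) (grid_wt_sum a)).
Qed.

End Algorithm.

Section MirrorPair.
Variables (R : realType) (T : nat) (dU : measure_display) (U : measurableType dU).
Variables (mu : probability U R) (f : nat -> U -> seq R -> R).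
Hypothesis f_meas : forall k : nat,
  measurable_fun setT (fun p : U * (2 * k).-tuple R => f k p.1 (tval p.2)).
Hypothesis f01 : forall (k : nat) (u : U) (s : (2 * k).-tuple R),
  0 <= f k u (tval s) <= 1.
Variable a : R.
Hypothesis a_range : 1/2 <= a < 1.

Local Notation wp := (grid_wt a).
Local Notation wm := (grid_wt (1 - a)).

Definition overlap : R := ((4 * (a * (1 - a))) ^+ (2 * T)) ^+ 2 / 2.

Lemma alg_gain_pair_le u :
  alg_gain T f wp u + alg_gain T f wm u <=
  T%:R * (gft_mean wp (1/3) + gft_mean wm (2/3) - price_gap a * overlap).
Proof.
have /andP[a_ge a_lt] := a_range.
rewrite /alg_gain -big_split (_ : T%:R * _ = \sum_(k < T)
    (gft_mean wp (1/3) + gft_mean wm (2/3) - price_gap a * overlap)); last first.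
  by rewrite sumr_const card_ord mulr_natl.
apply: ler_sum => -[k kT] _ /=.
apply: le_trans (Egrid_gft_mean_pair_le a_range _) _.
  by move=> s sk; exact: (price_in01 f01).
rewrite lerD2l lerN2 ler_wpM2l ?price_gap_ge0 // ler_pM2r // -!exprM.
by apply: ler_wiXn2l; [nra|nra|rewrite leq_mul2r leq_mul2l /= ltnW].
Qed.

Hypotheses (a0 : 0 <= a) (a1 : a <= 1) (b0 : 0 <= 1 - a) (b1 : 1 - a <= 1).

Lemma regret_pair_ge :
  ((T%:R * price_gap a * overlap)%:E <=
    regret T mu f (grid_law a0 a1) + regret T mu f (grid_law b0 b1))%E.
Proof.
have rp := regret_grid_law_ge T mu f a0 a1 (p := 1/3) ltac:(apply/andP; split; lra).
have rm := regret_grid_law_ge T mu f b0 b1 (p := 2/3) ltac:(apply/andP; split; lra).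
set Ip := (\int[mu]_u _)%E in rp; set Im := (\int[mu]_u _)%E in rm.
have gp0 u : setT u -> (0 <= (alg_gain T f wp u)%:E)%E.
  by move=> _; rewrite lee_fin alg_gain_ge0 // a0 a1.
have gm0 u : setT u -> (0 <= (alg_gain T f wm u)%:E)%E.
  by move=> _; rewrite lee_fin alg_gain_ge0 // b0 b1.
have mgain w : measurable_fun setT (fun u => (alg_gain T f w u)%:E).
  exact/measurable_EFinP/(measurable_alg_gain T f_meas).
have mp := mgain wp; have mm := mgain wm.
have Ip0 : (0 <= Ip)%E by exact: integral_ge0.
have Im0 : (0 <= Im)%E by exact: integral_ge0.
set B := T%:R * (gft_mean wp (1/3) + gft_mean wm (2/3) - price_gap a * overlap).
have IpIm : (Ip + Im <= B%:E)%E.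
  rewrite /Ip /Im -ge0_integralD //.
  apply: le_trans (@le_ge0_integral _ _ _ mu _ (fun _ => B%:E) _ _) _.
  - by move=> u; rewrite adde_ge0 ?gp0 ?gm0.
  - by move=> u; rewrite -EFinD lee_fin alg_gain_pair_le.
  by rewrite integral_cst //= probability_setT mule1.
have fin_Ip : Ip \is a fin_num.
  rewrite ge0_fin_numE //; apply: le_lt_trans (ltry B).
  by apply: le_trans IpIm; exact: leeDl.
have fin_Im : Im \is a fin_num.
  rewrite ge0_fin_numE //; apply: le_lt_trans (ltry B).
  by apply: le_trans IpIm; exact: leeDr.
rewrite -(fineK fin_Ip) in rp IpIm; rewrite -(fineK fin_Im) in rm IpIm.
apply: le_trans (leeD rp rm); rewrite -!EFinB -EFinD lee_fin.
move: IpIm; rewrite -EFinD lee_fin /B; lra.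
Qed.

End MirrorPair.

Lemma bernoulli_ineq (R : realFieldType) (x : R) m : 0 <= x <= 1 ->
  1 - m%:R * x <= (1 - x) ^+ m.
Proof.
case/andP=> x0 x1; elim: m => [|m IH]; first by rewrite mul0r subr0 expr0.
rewrite exprS -natr1.
have : (1 - m%:R * x) * (1 - x) <= (1 - x) * (1 - x) ^+ m.
  by rewrite mulrC; apply: ler_wpM2l; lra.
have : 0 <= m%:R * x * x by rewrite !mulr_ge0.
nra.
Qed.

(* For T = 0 the inverse is the junk value 0, and all four facts still hold. *)
Lemma inv_sqrt_scale (R : rcfType) (T : nat) (e : R) :
  e = (8 * Num.sqrt T%:R)^-1 ->
  [/\ 0 <= e, e <= 1/8, T%:R * e = Num.sqrt T%:R / 8 & T%:R * e ^+ 2 <= 1/64].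
Proof.
move=> ->; set s := Num.sqrt _.
have s0 : 0 <= s by apply: sqrtr_ge0.
have ss : s ^+ 2 = T%:R by rewrite sqr_sqrtr // ler0n.
have [s00|sn0] := eqVneq s 0.
  move: ss; rewrite s00 mulr0 invr0 expr0n /= => <-.
  by rewrite !mul0r; split; lra.
have s1 : 1 <= s.
  have : (T%:R : R) != 0 by rewrite -ss expf_neq0.
  by rewrite pnatr_eq0 -lt0n -(ler_nat R) -ss; nra.
split.
- by rewrite invr_ge0; lra.
- by rewrite -[1/8]invrK lef_pV2 ?posrE ?invr_gt0; [rewrite invf_div divr1|..]; lra.
- by rewrite -ss; field.
- by rewrite -ss (_ : _ * _ = 1/64); [lra|field].
Qed.

Section Perturbation.
Variables (R : realType) (e : R).
Hypothesis e_range : 0 <= e <= 1/8.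

Lemma price_gap_perturbed_ge : 5/16 * e <= price_gap (1/2 + e).
Proof.
have /andP[e0 e8] := e_range.
rewrite price_gapE (_ : 2/3 * _ * _ = 4/3 * e * (1/4 - e ^+ 2)); last by field.
have : 0 <= e * (1/64 - e ^+ 2) by apply: mulr_ge0 => //; nra.
nra.
Qed.

Lemma overlap_perturbed_ge (T : nat) : T%:R * e ^+ 2 <= 1/64 ->
  3/8 <= overlap T (1/2 + e).
Proof.
have /andP[e0 e8] := e_range => Te.
rewrite /overlap -exprM (_ : 4 * _ = 1 - 4 * e ^+ 2); last by field.
have := @bernoulli_ineq R (4 * e ^+ 2) (2 * T * 2).
rewrite mulr_ge0 ?sqr_ge0 //= => /(_ ltac:(nra)).
have : ((2 * T * 2)%:R : R) = 4 * T%:R by rewrite -natrM mulnC mulnA natrM.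
nra.
Qed.

End Perturbation.

Lemma ereal_sup_ge_half_sum (R : realType) (S : set (\bar R)) (x y : \bar R)
    (z : R) :
  S x -> S y -> (z%:E <= x + y)%E -> ((z / 2)%:E <= ereal_sup S)%E.
Proof.
move=> Sx Sy zxy; have [zx|xz] := leP (z / 2)%:E x.
  by apply: le_trans zx _; exact: ereal_sup_ubound.
apply: le_trans (ereal_sup_ubound Sy); rewrite leNgt; apply/negP => yz.
have := lteD xz yz; rewrite -EFinD (_ : z / 2 + z / 2 = z); last by field.
by rewrite ltNge zxy.
Qed.

Theorem theorem5p3 (R : realType) :
  exists c : R, 0 < c /\
  forall (T : nat) (dU : measure_display) (U : measurableType dU)
    (mu : probability U R) (f : nat -> U -> seq R -> R),
    (forall k : nat,
        measurable_fun setT (fun p : U * (2 * k).-tuple R => f k p.1 (tval p.2))) ->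
    (forall (k : nat) (u : U) (s : (2 * k).-tuple R),
        0 <= f k u (tval s) <= 1) ->
    ((c * Num.sqrt (T%:R))%:E <=
       ereal_sup [set regret T mu f nu
                 | nu in [set nu : probability R R | nu `[0%R, 1%R]%classic = 1%E]])%E.
Proof.
exists (1/200); split=> [|T dU U mu f f_meas f01]; first lra.
set e : R := (8 * Num.sqrt T%:R)^-1.
have [e0 e8 Te Te2] := inv_sqrt_scale (erefl e).
have e_range : 0 <= e <= 1/8 by rewrite e0 e8.
have a_range : 1/2 <= 1/2 + e < 1 by apply/andP; split; lra.
have a0 : 0 <= 1/2 + e by lra.
have a1 : 1/2 + e <= 1 by lra.
have b0 : 0 <= 1 - (1/2 + e) by lra.
have b1 : 1 - (1/2 + e) <= 1 by lra.
rewrite (_ : 1/200 * _ = (1/100 * Num.sqrt T%:R) / 2); last by field.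
apply: (ereal_sup_ge_half_sum (x := regret T mu f (grid_law a0 a1))
  (y := regret T mu f (grid_law b0 b1))); [exists (grid_law a0 a1) => //|
  exists (grid_law b0 b1) => //|]; try exact: grid_law_itv01.
apply: le_trans (regret_pair_ge T mu f_meas f01 a_range a0 a1 b0 b1).
rewrite lee_fin.
have gap := price_gap_perturbed_ge e_range.
have ov := overlap_perturbed_ge e_range Te2.
have : T%:R * (5/16 * e) * (3/8) <=
    T%:R * price_gap (1/2 + e) * overlap T (1/2 + e).
  by rewrite ler_pM ?mulr_ge0 // ler_wpM2l.
have := sqrtr_ge0 (T%:R : R); lra.
Qed.
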